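(* Setting: $n$ agents on a connected, undirected weighted graph with Laplacian $L_n$; $L=L_n\otimes I_m$. For each $i$, $\Omega_i\subset\mathbb R^{q_i}$ is closed and convex, $f^i$ is strictly convex on an open set containing $\Omega_i$, $W_i\in\mathbb R^{m\times q_i}$, $d_i\in\mathbb R^m$ with $\sum_id_i=d_0$; $\Omega=\prod_i\Omega_i$, $f(x)=\sum_if^i(x_i)$, $W=[W_1,\dots,W_n]$, $\overline W=\mathrm{diag}\{W_1,\dots,W_n\}$, $d=[d_1^{\rm T},\dots,d_n^{\rm T}]^{\rm T}$; Slater's condition holds (some $x$ in the interior of $\Omega$ has $Wx=d_0$). Let $(x^*,\lambda^*,z^* )\in\Omega\times\mathbb R^{nm}\times\mathbb R^{nm}$ be an equilibrium of the DDFA inclusion, i.e. there is $g\in\partial f(x^* )$ with $P_\Omega[x^*-g+\overline W^{\rm T}\lambda^*]=x^*$, $d-\overline Wx^*-Lz^*=0$, $L\lambda^*=0$. Define $$V(x,\lambda,z)=f(x)-f(x^* )+(\lambda^* )^{\rm T}(d-\overline Wx)+\tfrac12\|x-x^*\|^2+\tfrac12\|\lambda-\lambda^*\|^2+\tfrac12\|z-z^*\|^2.$$ Then on $\Omega\times\mathbb R^{nm}\times\mathbb R^{nm}$, $V$ is positive definite: $V\ge0$, $V(x,\lambda,z)=0$ if and only if $(x,\lambda,z)=(x^*,\lambda^*,z^* )$, and $V(x,\lambda,z)\to\infty$ as $\|(x,\lambda,z)\|\to\infty$.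
   Context: $\partial f$ is the convex subdifferential; $P_\Omega$ the Euclidean projection onto $\Omega$. *)

From HB Require Import structures.
From mathcomp Require Import all_boot all_order all_algebra.
From mathcomp Require Import all_classical all_reals all_analysis.
Set Implicit Arguments. Unset Strict Implicit. Unset Printing Implicit Defensive.
Import Order.TTheory GRing.Theory Num.Theory.
Import numFieldNormedType.Exports.
Local Open Scope classical_set_scope.
Local Open Scope ring_scope.

Section Defs.
Variable R : realType.

Definition dotv k (u v : 'cV[R]_k) : R := \sum_(j < k) u j 0 * v j 0.
Definition sqnorm k (u : 'cV[R]_k) : R := dotv u u.

Definition convex_set_on k (S : set 'cV[R]_k) : Prop :=
  forall x y (t : R), S x -> S y -> 0 <= t <= 1 -> S (t *: x + (1 - t) *: y).

Definition strictly_convex_on k (S : set 'cV[R]_k) (h : 'cV[R]_k -> R) : Prop :=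
  forall x y (t : R), S x -> S y -> x != y -> 0 < t < 1 ->
    h (t *: x + (1 - t) *: y) < t * h x + (1 - t) * h y.

Definition laplacian n (a : 'I_n -> 'I_n -> R) : 'M[R]_n :=
  \matrix_(i, j) (if i == j then \sum_(k < n | k != i) a i k else - a i j).

Definition connected_weighted_graph n (a : 'I_n -> 'I_n -> R) : Prop :=
  (forall i j, a i j = a j i) /\ (forall i j, 0 <= a i j) /\
  (forall i j, connect [rel u v | 0 < a u v] i j).

Definition pvec n (q : 'I_n -> nat) := forall i : 'I_n, 'cV[R]_(q i).

Definition psqnorm n (q : 'I_n -> nat) (x : pvec q) : R :=
  \sum_(i < n) sqnorm (x i).

Definition psub n (q : 'I_n -> nat) (x y : pvec q) : pvec q := fun i => x i - y i.

Definition in_prod n (q : 'I_n -> nat) (Om : forall i, set 'cV[R]_(q i)) (x : pvec q) :=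
  forall i, Om i (x i).

(* L = L_n (x) I_m acting on stacked vectors lam = (lam_1,...,lam_n), lam_i in R^m *)
Definition kronL n m (Ln : 'M[R]_n) (lam : 'I_n -> 'cV[R]_m) : 'I_n -> 'cV[R]_m :=
  fun i => \sum_(j < n) Ln i j *: lam j.

Definition is_proj n (q : 'I_n -> nat) (Om : forall i, set 'cV[R]_(q i)) (y p : pvec q) :=
  in_prod Om p /\
  forall w, in_prod Om w -> psqnorm (psub y p) <= psqnorm (psub y w).

Definition in_subdiff n (q : 'I_n -> nat) (U : forall i, set 'cV[R]_(q i))
  (f : forall i, 'cV[R]_(q i) -> R) (x g : pvec q) :=
  forall y : pvec q, in_prod U y ->
    \sum_(i < n) f i (y i) >= \sum_(i < n) f i (x i) + \sum_(i < n) dotv (g i) (y i - x i).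

End Defs.

From HB Require Import structures.
From mathcomp Require Import all_boot all_order all_algebra.
From mathcomp Require Import all_classical all_reals all_analysis.
From mathcomp Require Import ring lra.
Set Implicit Arguments. Unset Strict Implicit. Unset Printing Implicit Defensive.
Import Order.TTheory GRing.Theory Num.Theory.
Import numFieldNormedType.Exports.
Local Open Scope classical_set_scope.
Local Open Scope ring_scope.

(* With G x := f x - f x* - <W^T lambda*, x - x*>, the equilibrium equations
   d - W x* = L z*, L lambda* = 0 and the symmetry of L turn V into
   G x + (|x - x*|^2 + |lambda - lambda*|^2 + |z - z*|^2) / 2.
   On Omega, G >= <g - W^T lambda*, x - x*> >= 0: the first step is the
   subgradient inequality, the second the variational inequality of the
   projection x* = P_Omega[x* - g + W^T lambda*].  Since G x* = 0, V behaves
   like half the squared distance to the equilibrium, which gives all three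
   claims. *)

Section InnerProduct.
Variables (R : realType) (k : nat).
Implicit Types (u v w : 'cV[R]_k).

Lemma dotvE u v : dotv u v = (u^T *m v) 0 0.
Proof. by rewrite /dotv mxE; apply: eq_bigr => j _; rewrite mxE. Qed.

Lemma dotvC u v : dotv u v = dotv v u.
Proof. by apply: eq_bigr => j _; rewrite mulrC. Qed.

Lemma dotv0r u : dotv u 0 = 0.
Proof. by rewrite /dotv big1 // => j _; rewrite mxE mulr0. Qed.

Lemma dotvBr u v w : dotv u (v - w) = dotv u v - dotv u w.
Proof. by rewrite !dotvE mulmxBr !mxE. Qed.

Lemma dotvBl u v w : dotv (u - v) w = dotv u w - dotv v w.
Proof. by rewrite dotvC dotvBr -!(dotvC w). Qed.

Lemma dotvZr u v c : dotv u (c *: v) = c * dotv u v.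
Proof. by rewrite !dotvE -scalemxAr mxE. Qed.

Lemma dotv_sumr p u (F : 'I_p -> 'cV[R]_k) :
  dotv u (\sum_(j < p) F j) = \sum_(j < p) dotv u (F j).
Proof. by rewrite dotvE mulmx_sumr summxE; apply: eq_bigr => j _; rewrite dotvE. Qed.

Lemma sqnorm_ge0 u : 0 <= sqnorm u.
Proof. by apply: sumr_ge0 => j _; rewrite -expr2 sqr_ge0. Qed.

Lemma sqnorm_eq0 u : (sqnorm u == 0) = (u == 0).
Proof.
apply/idP/eqP => [|->]; last by rewrite /sqnorm dotv0r.
rewrite psumr_eq0 => [/allP u0|j _]; last by rewrite -expr2 sqr_ge0.
apply/matrixP => j c; rewrite (ord1 c) mxE.
by have /implyP/(_ isT) := u0 j (mem_index_enum _); rewrite mulf_eq0 orbb => /eqP.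
Qed.

Lemma sqnormBZ u v c :
  sqnorm (u - c *: v) = sqnorm u - 2 * c * dotv u v + c ^+ 2 * sqnorm v.
Proof.
rewrite /sqnorm /dotv !mulr_sumr -sumrB -big_split /=.
by apply: eq_bigr => j _; rewrite !mxE; ring.
Qed.

Lemma sqnormB_ge u v : sqnorm u / 2 - sqnorm v <= sqnorm (u - v).
Proof.
rewrite /sqnorm /dotv mulr_suml -sumrB; apply: ler_sum => j _; rewrite !mxE.
by have := sqr_ge0 (u j 0 - 2 * v j 0); nra.
Qed.

End InnerProduct.

Lemma dotv_mulmx (R : realType) k l (u : 'cV[R]_k) (A : 'M[R]_(k, l)) (v : 'cV[R]_l) :
  dotv u (A *m v) = dotv (A^T *m u) v.
Proof. by rewrite !dotvE trmx_mul trmxK mulmxA. Qed.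

Section ProductSpace.
Variables (R : realType) (n : nat) (q : 'I_n -> nat).
Implicit Types (x y : pvec R q).

Lemma psqnorm_ge0 x : 0 <= psqnorm x.
Proof. by apply: sumr_ge0 => i _; apply: sqnorm_ge0. Qed.

Lemma psqnorm_eq0 x : psqnorm x = 0 -> forall i, x i = 0.
Proof.
move=> /eqP; rewrite psumr_eq0 => [/allP x0 i|i _]; last exact: sqnorm_ge0.
by apply/eqP; rewrite -sqnorm_eq0; apply: implyP (x0 i (mem_index_enum _)) isT.
Qed.

Lemma psqnorm_psubxx x : psqnorm (psub x x) = 0.
Proof. by rewrite /psqnorm big1 // => i _; rewrite /psub subrr /sqnorm dotv0r. Qed.

Lemma psqnorm_psub_ge x y : psqnorm x / 2 - psqnorm y <= psqnorm (psub x y).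
Proof. rewrite mulr_suml -sumrB; apply: ler_sum => i _; exact: sqnormB_ge. Qed.

End ProductSpace.

Lemma le0_if_le_small_multiples (R : realFieldType) (P Q : R) :
  (forall t, 0 < t <= 1 -> P <= t * Q) -> P <= 0.
Proof.
move=> PtQ; rewrite leNgt; apply/negP => P_gt0.
have PQ_gt0 : 0 < P + `|Q| by rewrite ltr_wpDr.
pose t := P / (P + `|Q|).
have tPQ : t * (P + `|Q|) = P by rewrite divfK ?gt_eqF.
have t_gt0 : 0 < t by rewrite divr_gt0.
have /PtQ : 0 < t <= 1 by rewrite t_gt0 ler_pdivrMr // mul1r lerDl normr_ge0.
have := ler_wpM2l (ltW t_gt0) (ler_norm Q).
have := mulr_gt0 t_gt0 P_gt0; nra.
Qed.

(* The variational inequality of the projection p = P_Omega[y]: the segment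
   from p to any x in Omega stays in Omega, so t = 0 minimises |y - p - t (x - p)|^2. *)
Lemma is_proj_variational (R : realType) n (q : 'I_n -> nat)
    (Om : forall i, set 'cV[R]_(q i)) (y p x : pvec R q) :
  (forall i, convex_set_on (Om i)) -> is_proj Om y p -> in_prod Om x ->
  \sum_(i < n) dotv (y i - p i) (x i - p i) <= 0.
Proof.
move=> Om_convex [p_in p_min] x_in.
set P := \sum_(i < n) _; set Q := \sum_(i < n) sqnorm (x i - p i).
suff PtQ : forall t, 0 < t <= 1 -> P <= t * (Q / 2).
  exact: le0_if_le_small_multiples PtQ.
move=> t /andP[t_gt0 t_le1].
pose w : pvec R q := fun i => t *: x i + (1 - t) *: p i.
have w_in : in_prod Om w by move=> i; apply: Om_convex; rewrite ?(ltW t_gt0).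
have := p_min w w_in; rewrite /psqnorm /psub.
under [X in _ <= X]eq_bigr => i _.
  have -> : y i - w i = (y i - p i) - t *: (x i - p i).
    by apply/matrixP => j c; rewrite !mxE; ring.
  rewrite sqnormBZ; over.
rewrite big_split /= sumrB -!mulr_sumr -/P -/Q => ineq.
have : 0 <= t * (t * Q - 2 * P) by lra.
by rewrite pmulr_rge0 // subr_ge0; lra.
Qed.

Lemma kronL_adjoint (R : realType) n m (L : 'M[R]_n) (u v : 'I_n -> 'cV[R]_m) :
  \sum_(i < n) dotv (u i) (kronL L v i) = \sum_(j < n) dotv (kronL L^T u j) (v j).
Proof.
rewrite /kronL; under eq_bigr => i _ do rewrite dotv_sumr.
rewrite exchange_big; apply: eq_bigr => j _.
rewrite dotvC dotv_sumr; apply: eq_bigr => i _.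
by rewrite dotvZr dotvC dotvZr mxE.
Qed.

Lemma trmx_laplacian (R : realType) n (a : 'I_n -> 'I_n -> R) :
  (forall i j, a i j = a j i) -> (laplacian a)^T = laplacian a.
Proof.
move=> a_sym; apply/matrixP => i j; rewrite !mxE eq_sym.
by case: eqP => [->|_] //; rewrite a_sym.
Qed.

Section LagrangianGap.
Variables (R : realType) (n m : nat) (q : 'I_n -> nat) (a : 'I_n -> 'I_n -> R).
Variables (Om U : forall i : 'I_n, set 'cV[R]_(q i)).
Variable f : forall i : 'I_n, 'cV[R]_(q i) -> R.
Variable W : forall i : 'I_n, 'M[R]_(m, q i).
Arguments Om : clear implicits.
Arguments U : clear implicits.
Arguments f : clear implicits.
Variables (d : 'I_n -> 'cV[R]_m) (xs g : pvec R q) (ls zs : 'I_n -> 'cV[R]_m).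
Hypothesis a_sym : forall i j, a i j = a j i.
Hypothesis zs_eq : forall i, d i - W i *m xs i - kronL (laplacian a) zs i = 0.
Hypothesis ls_eq : forall i, kronL (laplacian a) ls i = 0.

Definition lagrangian_gap (x : pvec R q) : R :=
  \sum_(i < n) f i (x i) - \sum_(i < n) f i (xs i)
  + \sum_(i < n) dotv (ls i) (d i - W i *m x i).

Lemma dual_residual_dotv (x : pvec R q) :
  \sum_(i < n) dotv (ls i) (d i - W i *m x i)
  = - \sum_(i < n) dotv ((W i)^T *m ls i) (x i - xs i).
Proof.
have Lzs_ortho : \sum_(i < n) dotv (ls i) (kronL (laplacian a) zs i) = 0.
  rewrite kronL_adjoint trmx_laplacian //.
  by rewrite big1 // => j _; rewrite ls_eq dotvC dotv0r.
transitivity (\sum_(i < n) (dotv (ls i) (kronL (laplacian a) zs i)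
                             - dotv ((W i)^T *m ls i) (x i - xs i))).
  2: by rewrite sumrB Lzs_ortho sub0r.
apply: eq_bigr => i _.
have -> : d i - W i *m x i = kronL (laplacian a) zs i - W i *m (x i - xs i).
  rewrite -(subr0_eq (zs_eq i)) mulmxBr.
  by apply/matrixP => j c; rewrite !mxE; ring.
by rewrite [LHS]dotvBr dotv_mulmx.
Qed.

Lemma lagrangian_gap_xs : lagrangian_gap xs = 0.
Proof.
rewrite /lagrangian_gap dual_residual_dotv subrr add0r big1 ?oppr0 // => i _.
by rewrite subrr dotv0r.
Qed.

Hypothesis Om_convex : forall i, convex_set_on (Om i).
Hypothesis Om_sub_U : forall i, Om i `<=` U i.
Hypothesis g_subdiff : in_subdiff U f xs g.
Hypothesis xs_proj : is_proj Om (fun i => xs i - g i + (W i)^T *m ls i) xs.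

Lemma lagrangian_gap_ge0 (x : pvec R q) : in_prod Om x -> 0 <= lagrangian_gap x.
Proof.
move=> x_in; rewrite /lagrangian_gap dual_residual_dotv.
have subgrad := g_subdiff (fun i => Om_sub_U (x_in i)).
have := is_proj_variational Om_convex xs_proj x_in.
under eq_bigr => i _.
  have -> : xs i - g i + (W i)^T *m ls i - xs i = (W i)^T *m ls i - g i.
    by apply/matrixP => j c; rewrite !mxE; ring.
  rewrite dotvBl; over.
by rewrite sumrB; lra.
Qed.

End LagrangianGap.

Section QuadraticBowl.
Variables (R : realType) (n : nat) (q p r : 'I_n -> nat).
Variables (T : pvec R q -> R) (D : pvec R q -> Prop).
Variables (xs : pvec R q) (ls : pvec R p) (zs : pvec R r).
Hypothesis T_ge0 : forall x, D x -> 0 <= T x.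
Hypothesis T_xs : T xs = 0.

Let V (x : pvec R q) (l : pvec R p) (z : pvec R r) : R :=
  T x + 2^-1 * psqnorm (psub x xs) + 2^-1 * psqnorm (psub l ls)
  + 2^-1 * psqnorm (psub z zs).

Lemma quadratic_bowl_ge0 x l z : D x -> 0 <= V x l z.
Proof.
move=> /T_ge0; have := psqnorm_ge0 (psub x xs).
have := psqnorm_ge0 (psub l ls); have := psqnorm_ge0 (psub z zs).
rewrite /V; lra.
Qed.

Lemma quadratic_bowl_eq0 x l z :
  D x -> (V x l z = 0 <-> (x = xs /\ l = ls /\ z = zs)).
Proof.
move=> /T_ge0 Tx; split=> [V0|[-> [-> ->]]]; last first.
  by rewrite /V T_xs !psqnorm_psubxx !mulr0 !addr0.
have eq_of_psub k (u v : pvec R k) : psqnorm (psub u v) = 0 -> u = v.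
  move=> /psqnorm_eq0 uv0; apply: functional_extensionality_dep => i.
  exact/subr0_eq/uv0.
move: V0; rewrite /V; have := psqnorm_ge0 (psub x xs).
have := psqnorm_ge0 (psub l ls); have := psqnorm_ge0 (psub z zs).
by move=> *; split; [|split]; apply: eq_of_psub; lra.
Qed.

Lemma quadratic_bowl_coercive (M : R) : exists rad : R, forall x l z, D x ->
  Num.sqrt (psqnorm x + psqnorm l + psqnorm z) > rad -> V x l z > M.
Proof.
set C := psqnorm xs + psqnorm ls + psqnorm zs.
have C_ge0 : 0 <= C.
  by rewrite /C; have := psqnorm_ge0 xs; have := psqnorm_ge0 ls;
     have := psqnorm_ge0 zs; lra.
exists (4 * `|M| + 2 * C + 1) => x l z /T_ge0 Tx.
set S := _ + _ + psqnorm z => big_S.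
have S_ge0 : 0 <= S.
  by rewrite /S; have := psqnorm_ge0 x; have := psqnorm_ge0 l;
     have := psqnorm_ge0 z; lra.
have sqrtS2 : Num.sqrt S * Num.sqrt S = S by rewrite -expr2 sqr_sqrtr.
have S_big : 4 * `|M| + 2 * C + 1 < S by have := normr_ge0 M; nra.
have := psqnorm_psub_ge x xs; have := psqnorm_psub_ge l ls.
have := psqnorm_psub_ge z zs; have := ler_norm M.
by move: S_big; rewrite /V /S /C; lra.
Qed.

End QuadraticBowl.

Theorem lemma7 (R : realType) (n m : nat) (q : 'I_n -> nat)
  (a : 'I_n -> 'I_n -> R)
  (Om U : forall i : 'I_n, set 'cV[R]_(q i))
  (f : forall i : 'I_n, 'cV[R]_(q i) -> R)
  (W : forall i : 'I_n, 'M[R]_(m, q i))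
  (d : 'I_n -> 'cV[R]_m)
  (xs : pvec R q) (ls zs : 'I_n -> 'cV[R]_m) (g : pvec R q) :
  connected_weighted_graph a ->
  (forall i, closed (Om i) /\ convex_set_on (Om i)) ->
  (forall i, open (U i) /\ convex_set_on (U i) /\ Om i `<=` U i /\
             strictly_convex_on (U i) (f i)) ->
  (* Slater's condition *)
  (exists x0 : pvec R q, (forall i, (interior (Om i)) (x0 i)) /\
     \sum_(i < n) W i *m x0 i = \sum_(i < n) d i) ->
  (* (xs, ls, zs) is an equilibrium of the DDFA inclusion *)
  in_prod Om xs ->
  in_subdiff U f xs g ->
  is_proj Om (fun i => xs i - g i + (W i)^T *m ls i) xs ->
  (forall i, d i - W i *m xs i - kronL (laplacian a) zs i = 0) ->
  (forall i, kronL (laplacian a) ls i = 0) ->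
  let V := fun (x : pvec R q) (l z : 'I_n -> 'cV[R]_m) =>
      \sum_(i < n) f i (x i) - \sum_(i < n) f i (xs i)
      + \sum_(i < n) dotv (ls i) (d i - W i *m x i)
      + 2^-1 * psqnorm (psub x xs)
      + 2^-1 * \sum_(i < n) sqnorm (l i - ls i)
      + 2^-1 * \sum_(i < n) sqnorm (z i - zs i) in
  (forall x l z, in_prod Om x -> 0 <= V x l z) /\
  (forall x l z, in_prod Om x -> (V x l z = 0 <-> (x = xs /\ l = ls /\ z = zs))) /\
  (forall M : R, exists r : R, forall x l z, in_prod Om x ->
     Num.sqrt (psqnorm x + \sum_(i < n) sqnorm (l i) + \sum_(i < n) sqnorm (z i)) > r ->
     V x l z > M).
Proof.
move=> [a_sym _] Om_cc U_prop _ _ g_subdiff xs_proj zs_eq ls_eq V.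
have Om_convex i : convex_set_on (Om i) by case: (Om_cc i).
have Om_sub_U i : Om i `<=` U i by case: (U_prop i) => _ [_ []].
have gap_ge0 := lagrangian_gap_ge0 a_sym zs_eq ls_eq Om_convex Om_sub_U g_subdiff xs_proj.
have gap_xs := lagrangian_gap_xs f a_sym zs_eq ls_eq.
split; [|split].
- exact: (quadratic_bowl_ge0 (p := fun=> m) (r := fun=> m) xs ls zs gap_ge0).
- exact: (quadratic_bowl_eq0 (p := fun=> m) (r := fun=> m) ls zs gap_ge0 gap_xs).
- exact: (quadratic_bowl_coercive (p := fun=> m) (r := fun=> m) xs ls zs gap_ge0).
Qed.
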